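(* If all valuation functions are symmetric submodular (and the item cost functions are arbitrary non-decreasing functions $c_j:2^N\to\mathbb{R}_{\ge 0}$), then the mechanism IACSM is weakly group-strategyproof: for every coalition $Q\subseteq N$, every true symmetric submodular valuations $v_Q$ of $Q$, every symmetric submodular reports $v_{-Q}$ of the other players and every symmetric submodular misreport $b_Q$, there exists $i\in Q$ with $u_i(b_Q,v_{-Q})\le u_i(v_Q,v_{-Q})$.
   Context: Players $N=\{1,\dots,n\}$, items $M=\{1,\dots,m\}$. Valuations $v_i:2^M\to\mathbb{R}_{\ge0}$ are non-decreasing; symmetric means $f(S)=f(T)$ whenever $|S|=|T|$, submodular means $f(S\cup\{x\})-f(S)\ge f(T\cup\{x\})-f(T)$ for $S\subseteq T$, $x\notin T$. Given the declared profile, the mechanism outputs bundles $A_i$ and payments $p_i$; $u_i(\cdot)=v_i(A_i)-p_i$ measured with player $i$'s true valuation $v_i$. Mechanism IACSM (input: declared valuations $b$): maintain active set $X=N$, sets $T_j=N$ and cost shares $\chi_j=c_j(N)/n$ for all items $j$. While $X\neq\emptyset$: (1) every $i\in X$ computes $A_i\in\arg\max_{S\subseteq M}\{b_i(S)-\sum_{j\in S}\chi_j\}$, choosing among maximizers one of maximum cardinality $k$, and among those the $k$ items with smallest current $\chi_j$ (item ties by index); (2) choose $i^*\in X$ with $|A_{i^*}|$ minimum (ties by smallest index); (3) assign $A_{i^*}$ to $i^*$ permanently and remove $i^*$ from $X$; (4) for every item $j\notin A_{i^*}$ set $T_j:=T_j\setminus\{i^*\}$ and, if $T_j\ne\emptyset$,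 set $\chi_j:=\max\{\chi_j,c_j(T_j)/|T_j|\}$. Output the assigned bundles and payments $p_i=\sum_{j\in A_i}\chi_j$ with final cost shares. *)

From HB Require Import structures.
From mathcomp Require Import all_boot all_order all_algebra.
Set Implicit Arguments. Unset Strict Implicit. Unset Printing Implicit Defensive.
Import Order.TTheory GRing.Theory Num.Theory.
Local Open Scope ring_scope.

Section IACSM.
Variables (R : realFieldType) (n m : nat).

Definition set_nondecr (T : finType) (f : {set T} -> R) :=
  forall S U : {set T}, S \subset U -> f S <= f U.
Definition set_nonneg (T : finType) (f : {set T} -> R) := forall S, 0 <= f S.
Definition set_symmetric (T : finType) (f : {set T} -> R) :=
  forall S U : {set T}, #|S| = #|U| -> f S = f U.
Definition set_submodular (T : finType) (f : {set T} -> R) :=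
  forall (S U : {set T}) (x : T), S \subset U -> x \notin U ->
    f (x |: U) - f U <= f (x |: S) - f S.

Definition valuation (f : {set 'I_m} -> R) := set_nondecr f /\ set_nonneg f.
Definition sym_submod_val (f : {set 'I_m} -> R) :=
  [/\ set_nondecr f, set_nonneg f, set_symmetric f & set_submodular f].

Record state := State {
  sX : {set 'I_n};                  (* active players *)
  sT : 'I_m -> {set 'I_n};
  schi : 'I_m -> R;                 (* cost shares chi_j *)
  sA : 'I_n -> {set 'I_m}           (* assigned bundles *)
}.

Variable c : 'I_m -> {set 'I_n} -> R.

Definition item_le (chi : 'I_m -> R) (a b : 'I_m) : bool :=
  (chi a < chi b) || ((chi a == chi b) && (a <= b)%N).

Definition net_util (bi : {set 'I_m} -> R) (chi : 'I_m -> R) (S : {set 'I_m}) :=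
  bi S - \sum_(j in S) chi j.

Definition is_maximizer (bi : {set 'I_m} -> R) (chi : 'I_m -> R) (S : {set 'I_m}) :=
  [forall U : {set 'I_m}, net_util bi chi U <= net_util bi chi S].

Definition demand_size (bi : {set 'I_m} -> R) (chi : 'I_m -> R) : nat :=
  (\max_(S : {set 'I_m} | is_maximizer bi chi S) #|S|)%N.

Definition demand (bi : {set 'I_m} -> R) (chi : 'I_m -> R) : {set 'I_m} :=
  [set j in take (demand_size bi chi) (sort (item_le chi) (enum 'I_m))].

Definition select (b : 'I_n -> {set 'I_m} -> R) (st : state) : option 'I_n :=
  ohead [seq i <- enum 'I_n |
          (i \in sX st) &&
          [forall i' in sX st, (#|demand (b i) (schi st)| <= #|demand (b i') (schi st)|)%N]].

Definition step (b : 'I_n -> {set 'I_m} -> R) (st : state) : state :=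
  match select b st with
  | None => st
  | Some i =>
    let Ai := demand (b i) (schi st) in
    let T' := fun j => if j \in Ai then sT st j else sT st j :\ i in
    let chi' := fun j =>
      if (j \notin Ai) && (T' j != set0)
      then Num.max (schi st j) (c j (T' j) / #|T' j|%:R)
      else schi st j in
    State (sX st :\ i) T' chi' (fun k => if k == i then Ai else sA st k)
  end.

Definition init_state : state :=
  State [set: 'I_n] (fun _ => [set: 'I_n])
        (fun j => c j [set: 'I_n] / n%:R) (fun _ => set0).

(* n rounds suffice: each round with X nonempty removes one player *)
Definition final_state (b : 'I_n -> {set 'I_m} -> R) : state :=
  iter n (step b) init_state.

Definition alloc (b : 'I_n -> {set 'I_m} -> R) (i : 'I_n) : {set 'I_m} :=
  sA (final_state b) i.

Definition payment (b : 'I_n -> {set 'I_m} -> R) (i : 'I_n) : R :=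
  \sum_(j in alloc b i) schi (final_state b) j.

Definition utility (vi : {set 'I_m} -> R) (b : 'I_n -> {set 'I_m} -> R) (i : 'I_n) : R :=
  vi (alloc b i) - payment b i.

End IACSM.

(* With symmetric valuations a demand is a set of cheapest items, and by
   submodularity raising the shares of items outside the cheapest [k] cannot shrink
   a demand of size at least [k]. Hence the bundle of a served player keeps its
   shares until the end, and every later player demands at least as many items.
   Compare the truthful and the manipulated runs at the first round where they
   differ, and let p and q be the players they select. If p is in the coalition, it
   could have bought any bundle at the current (lowest) shares, so it gains nothing.
   Otherwise q is in the coalition and demands part of p's demand, whose shares are
   frozen in the truthful run, so q can buy the same bundle at the same price when
   served truthfully. If neither is in the coalition, tie-breaking selects the same
   player, so the runs do not differ yet. *)

From HB Require Import structures.
From mathcomp Require Import all_boot all_order all_algebra lra.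
Set Implicit Arguments. Unset Strict Implicit. Unset Printing Implicit Defensive.
Import Order.TTheory GRing.Theory Num.Theory.
Local Open Scope ring_scope.

Lemma sorted_index_count (T : eqType) (le : rel T) (s : seq T) x :
  transitive le -> antisymmetric le -> sorted le s -> uniq s -> x \in s ->
  index x s = count (fun y => le y x && (y != x)) s.
Proof.
move=> le_tr le_anti; elim: s => [//|a s IHs] /= s_sorted /andP[as_ s_uniq] xs.
have le_a : all (le a) s by exact: order_path_min le_tr s_sorted.
have {}s_sorted : sorted le s by exact: path_sorted s_sorted.
have [<-|ax] := eqVneq a x.
  rewrite /= andbF add0n; apply/esym/eqP; rewrite -leqn0 leqNgt -has_count.
  apply/hasP => -[y ys /andP[ya /negP]]; apply; apply/eqP/le_anti.
  by rewrite ya (allP le_a).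
have {}xs : x \in s by move: xs; rewrite inE eq_sym (negbTE ax).
by rewrite (allP le_a x xs) /= add1n IHs.
Qed.

Section CheapestItems.
Variables (R : realFieldType) (m : nat).
Implicit Types (chi : 'I_m -> R) (k : nat).

Lemma item_le_trans chi : transitive (item_le chi).
Proof.
move=> b a c; rewrite /item_le.
case/orP=> [lab|/andP[/eqP eab lab]]; case/orP=> [lbc|/andP[/eqP ebc lbc]].
- by rewrite (lt_trans lab lbc).
- by rewrite -ebc lab.
- by rewrite eab lbc.
- by rewrite eab ebc eqxx (leq_trans lab lbc) orbT.
Qed.

Lemma item_le_anti chi : antisymmetric (item_le chi).
Proof.
move=> a b; rewrite /item_le.
case/andP=> /orP[lab|/andP[/eqP eab lab]] /orP[lba|/andP[/eqP eba lba]].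
- by have := lt_trans lab lba; rewrite ltxx.
- by rewrite eba ltxx in lab.
- by rewrite eab ltxx in lba.
- by apply: val_inj; apply/eqP; rewrite eqn_leq lab lba.
Qed.

Lemma item_le_total chi : total (item_le chi).
Proof.
move=> a b; rewrite /item_le.
by case: (ltgtP (chi a) (chi b)) => //= _; exact: leq_total.
Qed.

Definition item_lt chi (x y : 'I_m) := item_le chi x y && (x != y).

(* [rank chi x] is the position of [x] in the order used by [demand]. *)
Definition rank chi x := count (item_lt chi ^~ x) (enum 'I_m).

Definition cheapest chi k := [set x | rank chi x < k]%N.

Lemma index_sort_item_le chi x :
  index x (sort (item_le chi) (enum 'I_m)) = rank chi x.
Proof.
rewrite (sorted_index_count (@item_le_trans chi) (@item_le_anti chi)).
- by apply/permP; rewrite perm_sort.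
- exact: sort_sorted (@item_le_total chi) _.
- by rewrite sort_uniq enum_uniq.
- by rewrite mem_sort mem_enum.
Qed.

Lemma demandE (bi : {set 'I_m} -> R) chi :
  demand bi chi = cheapest chi (demand_size bi chi).
Proof.
apply/setP=> x; rewrite !inE in_take ?index_sort_item_le //.
by rewrite mem_sort mem_enum.
Qed.

Lemma card_cheapest chi k : (k <= m)%N -> #|cheapest chi k| = k.
Proof.
move=> km; have -> : cheapest chi k = [set x in take k (sort (item_le chi) (enum 'I_m))].
  by apply/setP=> x; rewrite !inE in_take ?index_sort_item_le ?mem_sort ?mem_enum.
rewrite cardsE; have /card_uniqP -> : uniq (take k (sort (item_le chi) (enum 'I_m))).
  by rewrite take_uniq // sort_uniq enum_uniq.
by rewrite size_takel // size_sort size_enum_ord.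
Qed.

Lemma cheapest_subset chi k k' : (k <= k')%N -> cheapest chi k \subset cheapest chi k'.
Proof. by move=> kk'; apply/subsetP=> x; rewrite !inE => /leq_trans; apply. Qed.

Lemma rank_lt_le chi a b : (rank chi a < rank chi b)%N -> chi a <= chi b.
Proof.
rewrite -!index_sort_item_le => lt_ab.
have := sorted_ltn_index (@item_le_trans chi)
  (sort_sorted (@item_le_total chi) (enum 'I_m)).
move=> /(_ a b); rewrite !mem_sort !mem_enum => /(_ isT isT lt_ab).
by rewrite /item_le => /orP[/ltW //|/andP[/eqP-> _]].
Qed.

Lemma rank_raise chi1 chi2 x :
  (forall j, chi1 j <= chi2 j) -> chi2 x = chi1 x -> (rank chi2 x <= rank chi1 x)%N.
Proof.
move=> le12 ex; apply: sub_count => y /=; rewrite /item_lt /item_le ex.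
case/andP=> /orP[lt_yx|/andP[/eqP e le_yx]] ->; rewrite andbT.
  by rewrite (le_lt_trans (le12 y) lt_yx).
have : chi1 y <= chi1 x by rewrite -e le12.
by rewrite le_eqVlt => /orP[/eqP->|->] //; rewrite eqxx le_yx orbT.
Qed.

Lemma cheapest_raise chi1 chi2 k :
  (forall j, chi1 j <= chi2 j) -> {in cheapest chi1 k, forall j, chi2 j = chi1 j} ->
  cheapest chi1 k \subset cheapest chi2 k.
Proof.
move=> le12 eq12; apply/subsetP=> x xk; have := xk; rewrite !inE.
exact: leq_ltn_trans (rank_raise le12 (eq12 x xk)).
Qed.

Lemma sum_cheapest_le chi (S : {set 'I_m}) :
  \sum_(j in cheapest chi #|S|) chi j <= \sum_(j in S) chi j.
Proof.
set L := cheapest chi #|S|.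
have cL : #|L| = #|S| by rewrite card_cheapest // (leq_trans (max_card _)) ?card_ord.
rewrite (big_setID S) [X in _ <= X](big_setID L) /= setIC lerD //.
set A := L :\: S; set B := S :\: L.
have cAB : #|A| = #|B|.
  by apply/eqP; rewrite -(eqn_add2l #|S :&: L|) {1}setIC !cardsID cL.
have le_AB a b : a \in A -> b \in B -> chi a <= chi b.
  rewrite !inE => /andP[_ aL] /andP[bL _]; apply: rank_lt_le.
  by rewrite -leqNgt in bL; exact: leq_trans aL bL.
have : (\sum_(a in A) chi a) *+ #|B| <= (\sum_(b in B) chi b) *+ #|A|.
  rewrite -sumr_const -sumrMnl; apply: ler_sum => b bB.
  by rewrite -(sumr_const (mem A)); apply: ler_sum => a aA; exact: le_AB.
rewrite cAB lerMn2r => /orP[/eqP B0|//].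
by rewrite (cards0_eq B0) (cards0_eq (etrans cAB B0)) !big_set0.
Qed.
End CheapestItems.

Lemma submodular_union_gain (R : realFieldType) (T : finType) (f : {set T} -> R) :
  set_submodular f -> forall E S U : {set T},
  S \subset U -> {in E, forall x, x \notin U} ->
  f (U :|: E) - f U <= f (S :|: E) - f S.
Proof.
move=> f_sub E; elim: {E}#|E| {-2}E (erefl #|E|) => [|k IHk] E cE S U sSU EU.
  by rewrite (cards0_eq cE) !setU0 !subrr.
have [x xE] : exists x, x \in E by apply/set0Pn; rewrite -card_gt0 cE.
set E' := E :\ x.
have cE' : #|E'| = k by move: cE; rewrite (cardsD1 x E) xE add1n => -[].
have E'U : {in E', forall y, y \notin U} by move=> y /setD1P[_]; apply: EU.
have xUE' : x \notin U :|: E' by rewrite !inE negb_or eqxx EU.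
have xSE' : x \notin S :|: E' by apply: contra xUE'; apply/subsetP/setSU.
have addx V : V :|: E = x |: (V :|: E') by rewrite setUCA setD1K.
have := IHk E' cE' S U sSU E'U; have := f_sub _ _ x (setSU E' sSU) xUE'.
rewrite !addx; lra.
Qed.

Section Demand.
Variables (R : realFieldType) (m : nat).
Implicit Types (chi : 'I_m -> R) (bi : {set 'I_m} -> R).

Lemma exists_maximizer bi chi : exists S, is_maximizer bi chi S.
Proof.
have [S _ maxS] := @arg_maxP _ _ _ set0 predT (net_util bi chi) isT.
by exists S; apply/forallP => U; exact: maxS.
Qed.

Lemma maximizer_card_le bi chi S :
  is_maximizer bi chi S -> (#|S| <= demand_size bi chi)%N.
Proof. exact: (leq_bigmax_cond (F := fun S : {set 'I_m} => #|S|)). Qed.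

Lemma demand_size_attained bi chi :
  exists2 S, is_maximizer bi chi S & #|S| = demand_size bi chi.
Proof.
have [S0 maxS0] := exists_maximizer bi chi.
have : (0 < #|[pred S | is_maximizer bi chi S]|)%N by apply/card_gt0P; exists S0.
by move=> /(eq_bigmax_cond (fun S : {set 'I_m} => #|S|)) [S maxS eS]; exists S.
Qed.

Lemma demand_size_le bi chi : (demand_size bi chi <= m)%N.
Proof.
by apply/bigmax_leqP => S _; rewrite (leq_trans (max_card _)) ?card_ord.
Qed.

Lemma card_demand bi chi : #|demand bi chi| = demand_size bi chi.
Proof. by rewrite demandE card_cheapest // demand_size_le. Qed.

Lemma net_util_le_cheapest bi chi (T : {set 'I_m}) : set_symmetric bi ->
  net_util bi chi T <= net_util bi chi (cheapest chi #|T|).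
Proof.
move=> bi_sym; have Tm : (#|T| <= m)%N by rewrite (leq_trans (max_card _)) ?card_ord.
rewrite /net_util (bi_sym (cheapest chi #|T|) T) ?card_cheapest //.
by rewrite lerD2l lerN2 sum_cheapest_le.
Qed.

Lemma demand_maximal bi chi : set_symmetric bi ->
  forall U, net_util bi chi U <= net_util bi chi (demand bi chi).
Proof.
move=> bi_sym U; have [S maxS eS] := demand_size_attained bi chi.
by rewrite demandE -eS (le_trans (forallP maxS U)) ?net_util_le_cheapest.
Qed.

(* Adding the next cheapest items [E] to [cheapest chi j] gains at least as
   much value as adding them to the complement of [E] in the demand, and
   there the gain covers their price since the demand is a maximizer. *)
Lemma net_util_cheapest_mono bi chi j k : sym_submod_val bi -> (j <= k)%N ->
  (k <= demand_size bi chi)%N ->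
  net_util bi chi (cheapest chi j) <= net_util bi chi (cheapest chi k).
Proof.
case=> _ _ bi_sym bi_sub jk kK.
set D := cheapest chi (demand_size bi chi).
set Dj := cheapest chi j; set Dk := cheapest chi k.
have sjk : Dj \subset Dk by apply: cheapest_subset.
have skD : Dk \subset D by apply: cheapest_subset.
set E := Dk :\: Dj; set F := D :\: E.
have sED : E \subset D by rewrite (subset_trans (subsetDl _ _)).
have sDjF : Dj \subset F.
  apply/subsetP => x xj; rewrite !in_setD xj /=.
  by rewrite (subsetP skD) // (subsetP sjk).
have EF : {in E, forall x, x \notin F} by move=> x xE; rewrite in_setD xE.
have DjE : Dj :|: E = Dk by rewrite /E setDE setUIr setUCr setIT; apply/setUidPr.
have FE : F :|: E = D by rewrite setUC /F setDE setUIr setUCr setIT; apply/setUidPr.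
have gain := submodular_union_gain bi_sub sDjF EF; rewrite FE DjE in gain.
have maxD := demand_maximal chi bi_sym F; rewrite demandE -/D in maxD.
have sumD : \sum_(x in D) chi x = \sum_(x in E) chi x + \sum_(x in F) chi x.
  by rewrite (big_setID E) /= (setIidPr sED).
have sumDk : \sum_(x in Dk) chi x = \sum_(x in Dj) chi x + \sum_(x in E) chi x.
  by rewrite (big_setID Dj) /= (setIidPr sjk).
move: maxD; rewrite /net_util sumD sumDk; lra.
Qed.

Lemma demand_size_raise bi chi1 chi2 k : sym_submod_val bi ->
  (forall j, chi1 j <= chi2 j) -> {in cheapest chi1 k, forall j, chi2 j = chi1 j} ->
  (k <= demand_size bi chi1)%N -> (k <= demand_size bi chi2)%N.
Proof.
move=> bi_ssv le12 eq12 kK; have [_ _ bi_sym _] := bi_ssv.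
have [M maxM] := exists_maximizer bi chi2.
have [kM|Mk] := leqP k #|M|; first exact: leq_trans kM (maximizer_card_le maxM).
have km : (k <= m)%N by apply: leq_trans kK (demand_size_le _ _).
rewrite -{1}(card_cheapest chi1 km); apply: maximizer_card_le; apply/forallP => U.
apply: le_trans (forallP maxM U) _.
have le_M : net_util bi chi2 M <= net_util bi chi1 M.
  by rewrite /net_util lerD2l lerN2; apply: ler_sum => x _.
have eq_k : net_util bi chi1 (cheapest chi1 k) = net_util bi chi2 (cheapest chi1 k).
  by rewrite /net_util; congr (_ - _); apply: eq_bigr => x /eq12->.
rewrite -eq_k (le_trans le_M) // (le_trans (net_util_le_cheapest chi1 M bi_sym)) //.
exact: net_util_cheapest_mono (ltnW Mk) kK.
Qed.

End Demand.

Lemma ohead_filter_mem (T : eqType) (P : pred T) (s : seq T) x :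
  ohead [seq y <- s | P y] = Some x -> (x \in s) && P x.
Proof.
elim: s => [//|a s IHs] /=; case: ifP => Pa /=; first by case=> <-; rewrite inE eqxx Pa.
by move/IHs => /andP[xs ->]; rewrite inE xs orbT.
Qed.

Lemma ohead_filter_index (T : eqType) (P : pred T) (s : seq T) x y :
  ohead [seq z <- s | P z] = Some x -> y \in s -> P y -> (index x s <= index y s)%N.
Proof.
elim: s => [//|a s IHs] /=; case: ifP => Pa /=; first by case=> <-; rewrite eqxx.
move=> hx; rewrite inE; have [-> _|ya /= ys Py] := eqVneq y a; first by rewrite Pa.
have /andP[_ Px] := ohead_filter_mem hx.
have xa : x != a by apply: contraTneq Px => ->; rewrite Pa.
by rewrite eq_sym (negbTE xa) ltnS IHs.
Qed.

Section Run.
Variables (R : realFieldType) (n m : nat) (c : 'I_m -> {set 'I_n} -> R).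
Variable B : 'I_n -> {set 'I_m} -> R.
Implicit Types (S : state R n m) (i p : 'I_n) (t : nat).

Definition run t := iter t (step c B) (init_state c).

Definition min_demander S i :=
  (i \in sX S) &&
  [forall i' in sX S, #|demand (B i) (schi S)| <= #|demand (B i') (schi S)|]%N.

Lemma select_min_demander S i : select B S = Some i -> min_demander S i.
Proof. by move/ohead_filter_mem => /andP[]. Qed.

Lemma select_spec S i : select B S = Some i ->
  i \in sX S /\ forall i', i' \in sX S ->
     (demand_size (B i) (schi S) <= demand_size (B i') (schi S))%N.
Proof.
move/select_min_demander => /andP[iX /forall_inP min_i]; split=> // i' i'X.
by rewrite -!card_demand min_i.
Qed.

Lemma select_leq S i i' : select B S = Some i -> min_demander S i' -> (i <= i')%N.
Proof.
move=> /ohead_filter_index min_i min_i'.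
by rewrite -!index_enum_ord min_i ?mem_enum.
Qed.

Lemma select_exists S : sX S != set0 -> exists i, select B S = Some i.
Proof.
case/set0Pn => i0 i0X.
have [i iX min_i] := arg_minnP (fun i => #|demand (B i) (schi S)|) i0X.
have : i \in [seq i <- enum 'I_n | min_demander S i].
  by rewrite mem_filter mem_enum andbT; apply/andP; split=> //; apply/forall_inP.
by rewrite /select; case: [seq _ <- _ | _] => // a s' _; exists a.
Qed.

Lemma step_X S : sX (step c B S) =
  if select B S is Some i then sX S :\ i else sX S.
Proof. by rewrite /step; case: select. Qed.

Lemma step_A S i : select B S = Some i -> forall k,
  sA (step c B S) k = if k == i then demand (B i) (schi S) else sA S k.
Proof. by rewrite /step => ->. Qed.

Lemma step_chi_le S j : schi S j <= schi (step c B S) j.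
Proof. by rewrite /step; case: select => //= i; case: ifP; rewrite ?le_max lexx. Qed.

Lemma step_chi_demand S i : select B S = Some i ->
  {in demand (B i) (schi S), forall j, schi (step c B S) j = schi S j}.
Proof. by rewrite /step => -> j /= ->. Qed.

Lemma runS t : run t.+1 = step c B (run t).
Proof. by []. Qed.

Lemma run_chi_mono t t' j : (t <= t')%N -> schi (run t) j <= schi (run t') j.
Proof.
move/subnK => <-; elim: (t' - t)%N => [//|d Idef_d].
exact: le_trans Idef_d (step_chi_le _ _).
Qed.

Lemma run_X_sub t t' : (t <= t')%N -> sX (run t') \subset sX (run t).
Proof.
move/subnK => <-; elim: (t' - t)%N => [|d Idef_d]; first exact: subxx.
by apply: subset_trans _ Idef_d; rewrite addSn runS step_X; case: select => // i; apply: subsetDl.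
Qed.

Lemma card_run_X t : (t <= n)%N -> #|sX (run t)| = (n - t)%N.
Proof.
elim: t => [|t IHt] tn; first by rewrite subn0 /= cardsT card_ord.
have {}IHt := IHt (ltnW tn).
have [|i sel_i] := select_exists (S := run t); first by rewrite -card_gt0 IHt subn_gt0.
have [iX _] := select_spec sel_i.
by rewrite runS step_X sel_i subnS -IHt (cardsD1 i (sX (run t))) iX.
Qed.

Lemma run_X_end t : (n <= t)%N -> sX (run t) = set0.
Proof.
move=> nt; apply/eqP; rewrite -subset0 (subset_trans (run_X_sub nt)) //.
by rewrite subset0 -cards_eq0 card_run_X ?subnn.
Qed.

Lemma select_before_end t p : select B (run t) = Some p -> (t < n)%N.
Proof.
move=> /select_spec[pX _]; rewrite ltnNge; apply: contraTN pX => nt.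
by rewrite run_X_end ?inE.
Qed.

Lemma selected_eventually p t : p \in sX (run t) ->
  exists2 t', (t <= t')%N & select B (run t') = Some p.
Proof.
move def_d : (n - t)%N => d; elim: d t def_d => [|d Idef_d] t def_d pX.
  by move/eqP: def_d; rewrite subn_eq0 => /run_X_end eX; rewrite eX inE in pX.
have [|i sel_i] := select_exists (S := run t); first by apply/set0Pn; exists p.
have [<-|ip] := eqVneq i p; first by exists t.
have pX' : p \in sX (run t.+1) by rewrite runS step_X sel_i !inE eq_sym ip.
have [|t' tt' sel_p] := Idef_d t.+1 _ pX'; first by rewrite subnS def_d.
by exists t' => //; exact: ltnW.
Qed.

Hypothesis B_ssv : forall i, sym_submod_val (B i).

Definition demand_floor S k := forall i, i \in sX S -> (k <= demand_size (B i) (schi S))%N.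

(* The selected player demands the [k] cheapest items, so their shares stay put, and
   raising the other shares cannot shrink anyone's demand below [k]. *)
Lemma step_demand_floor S k : demand_floor S k ->
  {in cheapest (schi S) k, forall j, schi (step c B S) j = schi S j} /\
  demand_floor (step c B S) k.
Proof.
move=> floor_k; case sel_i : (select B S) => [i|]; last by rewrite /step sel_i.
have [iX _] := select_spec sel_i.
have frozen : {in cheapest (schi S) k, forall j, schi (step c B S) j = schi S j}.
  move=> j jk; apply: (step_chi_demand sel_i); rewrite demandE.
  exact: subsetP (cheapest_subset _ (floor_k i iX)) j jk.
split=> // i'; rewrite step_X sel_i => /setD1P[_ i'X].
exact: demand_size_raise (B_ssv i') (step_chi_le S) frozen (floor_k i' i'X).
Qed.

Lemma demand_shares_frozen t p s : select B (run t) = Some p -> (t <= s)%N ->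
  {in demand (B p) (schi (run t)), forall j, schi (run s) j = schi (run t) j}.
Proof.
move=> sel_p /subnK <-; rewrite demandE.
set k := demand_size _ _; set D := cheapest _ k.
suff : {in D, forall j, schi (run (s - t + t)) j = schi (run t) j} /\
       demand_floor (run (s - t + t)) k by case.
elim: (s - t)%N => [|d [frozen floor_k]].
  by split=> // i iX; have [_] := select_spec sel_p; apply.
have [frozen' floor_k'] := step_demand_floor floor_k.
split=> // j jD; rewrite addSn runS frozen' ?frozen //.
have sub := cheapest_raise (fun j => run_chi_mono j (leq_addl d t)) frozen.
exact: subsetP sub j jD.
Qed.

Lemma alloc_after t p s : select B (run t) = Some p -> (t < s)%N ->
  p \notin sX (run s) /\ sA (run s) p = demand (B p) (schi (run t)).
Proof.
move=> sel_p /subnK <-; elim: (s - t.+1)%N => [|d [pX pA]].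
  by rewrite add0n runS step_X sel_p (step_A sel_p) eqxx !inE eqxx.
rewrite addSn runS step_X; case sel_i : (select B _) => [i|]; last by rewrite /step sel_i.
have [iX _] := select_spec sel_i.
have ip : (p == i) = false by apply/negbTE; apply: contraNneq pX => ->.
by rewrite !inE (negbTE pX) andbF (step_A sel_i) ip.
Qed.

Lemma alloc_payment_selected t p : select B (run t) = Some p ->
  alloc c B p = demand (B p) (schi (run t)) /\
  payment c B p = \sum_(j in demand (B p) (schi (run t))) schi (run t) j.
Proof.
move=> sel_p; have tn := select_before_end sel_p.
have [_ pA] := alloc_after sel_p tn.
split=> //; rewrite /payment; change (alloc c B p) with (sA (run n) p); rewrite pA.
by apply: eq_bigr => j jD; exact: (demand_shares_frozen sel_p (ltnW tn) jD).
Qed.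
End Run.

Section TwoRuns.
Variables (R : realFieldType) (n m : nat) (c : 'I_m -> {set 'I_n} -> R).
Variables v w : 'I_n -> {set 'I_m} -> R.
Hypotheses (v_ssv : forall i, sym_submod_val (v i)) (w_ssv : forall i, sym_submod_val (w i)).
Variables (t : nat) (p : 'I_n).
Hypothesis runs_agree : run c v t = run c w t.
Hypothesis sel_p : select v (run c v t) = Some p.

Lemma utility_le_selected_truthful : utility c (v p) w p <= utility c (v p) v p.
Proof.
have [pX _] := select_spec sel_p; rewrite runs_agree in pX.
have [t' tt' sel_w] := selected_eventually pX.
have [vA vP] := alloc_payment_selected v_ssv sel_p.
have [wA wP] := alloc_payment_selected w_ssv sel_w.
rewrite /utility vA vP wA wP.
have [_ _ vp_sym _] := v_ssv p.
apply: le_trans (demand_maximal _ vp_sym (demand (w p) (schi (run c w t')))).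
rewrite /net_util lerD2l lerN2.
by apply: ler_sum => j _; rewrite runs_agree run_chi_mono.
Qed.

Variable q : 'I_n.
Hypothesis sel_q : select w (run c w t) = Some q.
Hypothesis same_p : w p = v p.

(* [q] overtakes [p] only by demanding part of [p]'s demand, whose shares are
   frozen once [p] leaves the truthful run. *)
Lemma utility_le_overtaking : q != p -> utility c (v q) w q <= utility c (v q) v q.
Proof.
move=> qp; have sel_qv : select w (run c v t) = Some q by rewrite runs_agree.
have [pX p_min] := select_spec sel_p; have [qX q_min] := select_spec sel_qv.
have sub : demand (w q) (schi (run c v t)) \subset demand (v p) (schi (run c v t)).
  by rewrite !demandE cheapest_subset // -same_p q_min.
have qX' : q \in sX (run c v t.+1) by rewrite runS step_X sel_p !inE qp.
have [tq ttq sel_q'] := selected_eventually qX'.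
have [vA vP] := alloc_payment_selected v_ssv sel_q'.
have [wA wP] := alloc_payment_selected w_ssv sel_q.
rewrite /utility vA vP wA wP -runs_agree.
have [_ _ vq_sym _] := v_ssv q.
apply: le_trans (demand_maximal _ vq_sym (demand (w q) (schi (run c v t)))).
rewrite /net_util lerD2l lerN2.
rewrite le_eqVlt; apply/orP; left; apply/eqP/eq_bigr => j jD.
by rewrite (demand_shares_frozen v_ssv sel_p (ltnW ttq) (subsetP sub j jD)).
Qed.

Lemma select_eq_truthful : w q = v q -> q = p.
Proof.
move=> same_q; have sel_qv : select w (run c v t) = Some q by rewrite runs_agree.
have [pX p_min] := select_spec sel_p; have [qX q_min] := select_spec sel_qv.
have eq_pq : demand_size (v q) (schi (run c v t)) = demand_size (v p) (schi (run c v t)).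
  by apply/eqP; rewrite eqn_leq p_min // andbT -same_q -same_p q_min.
apply/val_inj/eqP; rewrite eqn_leq (select_leq sel_qv) ?(select_leq sel_p) //.
  rewrite /min_demander qX; apply/forall_inP => i iX.
  by rewrite !card_demand eq_pq p_min.
rewrite /min_demander pX; apply/forall_inP => i iX.
by rewrite !card_demand same_p -eq_pq -same_q q_min.
Qed.
End TwoRuns.

Lemma coalition_no_gain_from (R : realFieldType) (n m : nat)
    (c : 'I_m -> {set 'I_n} -> R) (Q : {set 'I_n}) (v w : 'I_n -> {set 'I_m} -> R) :
  Q != set0 -> (forall i, sym_submod_val (v i)) -> (forall i, sym_submod_val (w i)) ->
  (forall i, i \notin Q -> w i = v i) ->
  forall t, (t <= n)%N -> run c v t = run c w t ->
  exists2 i, i \in Q & utility c (v i) w i <= utility c (v i) v i.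
Proof.
move=> Q0 v_ssv w_ssv w_out t; move def_d : (n - t)%N => d.
elim: d t def_d => [|d Idef_d] t def_d tn runs_agree.
  have [i iQ] := set0Pn _ Q0; exists i => //.
  have et : t = n by apply/eqP; rewrite eqn_leq tn -subn_eq0 def_d.
  rewrite et in runs_agree.
  by rewrite /utility /payment /alloc /final_state -/(run c v n) runs_agree.
have nX : sX (run c v t) != set0 by rewrite -card_gt0 card_run_X ?def_d.
have [p sel_p] := select_exists v nX; have [q sel_qv] := select_exists w nX.
have sel_q : select w (run c w t) = Some q by rewrite -runs_agree.
have [pQ|pQ] := boolP (p \in Q).
  by exists p => //; exact: utility_le_selected_truthful sel_p.
have same_p := w_out p pQ.
have [qQ|qQ] := boolP (q \in Q).
  exists q => //; apply: (utility_le_overtaking v_ssv w_ssv runs_agree sel_p sel_q same_p).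
  by apply: contraNneq pQ => <-.
have qp := select_eq_truthful runs_agree sel_p sel_q same_p (w_out q qQ).
apply: (Idef_d t.+1); first by rewrite subnS def_d.
  by rewrite -subn_gt0 def_d.
by rewrite !runS -runs_agree /step sel_p sel_qv qp same_p.
Qed.

Theorem mainTheorem7 (R : realFieldType) (n m : nat)
  (c : 'I_m -> {set 'I_n} -> R)
  (hc_mono : forall j, set_nondecr (c j))
  (hc_nonneg : forall j, set_nonneg (c j))
  (Q : {set 'I_n}) (hQ : Q != set0)
  (v : 'I_n -> {set 'I_m} -> R)
  (hv : forall i, sym_submod_val (v i))
  (b : 'I_n -> {set 'I_m} -> R)
  (hb : forall i, i \in Q -> sym_submod_val (b i)) :
  exists2 i, i \in Q &
    utility c (v i) (fun k => if k \in Q then b k else v k) i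
      <= utility c (v i) v i.
Proof.
have hw : forall i, sym_submod_val (if i \in Q then b i else v i).
  by move=> i; case: ifP => [/hb|_] //; apply: hv.
exact: coalition_no_gain_from hQ hv hw (fun i => ifN _ _) 0%N isT erefl.
Qed.
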